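(* Let $n\ge1$ and let $L$ be a simplicial complex on the ground set $[k]$. Then the matching $\mathcal{M}_L$ on the directed graph $G_L$ is acyclic, i.e. the directed graph obtained from $G_L$ by reversing the direction of every edge in $\mathcal{M}_L$ contains no directed cycle.
   Context: Give $D^n$ the regular CW structure with cells $e_-^i,e_+^i$ for $0\le i\le n-1$ (for each $i$, $e_\pm^i$ are the two open hemispheres of $S^i\subseteq S^{n-1}$, so the closure of $e_\pm^{i}$ is $e_\pm^i\cup\bigcup_{j<i}(e_-^j\cup e_+^j)$) together with the top cell $e_\bullet^n$ whose boundary is $S^{n-1}$. Give $(D^n)^k$ the product cell structure, with cells $c=c_1\times\dots\times c_k$. A simplicial complex $L$ on $[k]$ is a family of subsets of $[k]$ closed under taking subsets. For a cell $c$ let $\mathrm{supp}(c)=\{i: c_i=e_\bullet^n\}$; the polyhedral product $\mathcal{Z}_L(D^n,S^{n-1})$ is the subcomplex of $(D^n)^k$ consisting of the cells $c$ with $\mathrm{supp}(c)\in L$. $G_L$ is the directed graph whose vertices are these cells, with an edge $c\to c'$ whenever $c'$ lies in the closure of $c$ and $\dim c'=\dim c-1$. Let $\mathcal{M}$ be the set of edges $e_-^{i+1}\to e_+^i$ ($0\le i\le n-2$) and $e_\bullet^n\to e_+^{n-1}$ of the analogous graph for $D^n$. Define $\mathcal{M}_1=\{c\to c'\in G_L : c_1\to c'_1\in\mathcal{M}\}$ and, for $1\le j\le k-1$, $\mathcal{M}_{j+1}=\{c\to c'\in G_L: $ neither $c$ nor $c'$ belongs to an edge of $\mathcal{M}_1\cup\dots\cup\mathcal{M}_j$,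 and $c_{j+1}\to c'_{j+1}\in\mathcal{M}\}$. Set $\mathcal{M}_L=\bigcup_{j=1}^k\mathcal{M}_j$; this is a matching (each cell lies in at most one edge of $\mathcal{M}_L$). *)

From mathcomp Require Import all_boot.
Set Implicit Arguments. Unset Strict Implicit. Unset Printing Implicit Defensive.

(* Cells of D^n:  None = e_bullet^n ;  Some (s, i) = e_s^i with s = true for '+',
   s = false for '-', i : 'I_n (so 0 <= i <= n-1). *)
Definition cellD (n : nat) := option (bool * 'I_n).

Definition dimD n (c : cellD n) : nat :=
  match c with None => n | Some (_, i) => val i end.

Definition closD n (c c' : cellD n) : bool :=
  match c with
  | None => true
  | Some (_, i) =>
      match c' with
      | None => false
      | Some (_, i') => (val i' < val i) || (c' == c)
      end
  end.

Definition MD n (c c' : cellD n) : bool :=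
  match c, c' with
  | Some (false, i), Some (true, i') => val i == (val i').+1
  | None, Some (true, i') => val i' == n.-1
  | _, _ => false
  end.

Definition cellP (n k : nat) := {ffun 'I_k -> cellD n}.

Definition dimP n k (c : cellP n k) : nat := \sum_(t < k) dimD (c t).

Definition closP n k (c c' : cellP n k) : bool := [forall t, closD (c t) (c' t)].

Definition supp n k (c : cellP n k) : {set 'I_k} := [set t | c t == None].

Definition simplicial_complex k (L : {set {set 'I_k}}) : Prop :=
  forall s t : {set 'I_k}, s \in L -> t \subset s -> t \in L.

Definition GLvert n k (L : {set {set 'I_k}}) (c : cellP n k) : bool := supp c \in L.

Definition GLedge n k (L : {set {set 'I_k}}) (c c' : cellP n k) : bool :=
  [&& GLvert L c, GLvert L c', closP c c' & dimP c' + 1 == dimP c].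

Definition covered n k (U : rel (cellP n k)) (c : cellP n k) : bool :=
  [exists d, U c d || U d c].

(* New edges at (0-indexed) stage j, given the union U of the earlier stages:
   this is M_{j+1} in the paper (coordinate j+1 in 1-indexed notation). *)
Definition Mnew n k (L : {set {set 'I_k}}) (j : nat) (U : rel (cellP n k))
    (c c' : cellP n k) : bool :=
  [&& GLedge L c c', ~~ covered U c, ~~ covered U c' &
      [exists t : 'I_k, (val t == j) && MD (c t) (c' t)]].

(* MU j = M_1 \cup ... \cup M_j. *)
Fixpoint MU n k (L : {set {set 'I_k}}) (j : nat) : rel (cellP n k) :=
  match j with
  | 0 => fun _ _ => false
  | j'.+1 => fun c c' => MU L j' c c' || Mnew L j' (MU L j') c c'
  end.

Definition ML n k (L : {set {set 'I_k}}) : rel (cellP n k) := MU L k.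

Definition redge n k (L : {set {set 'I_k}}) (c c' : cellP n k) : bool :=
  (GLedge L c c' && ~~ ML L c c') || ML L c' c.

Definition acyclic_rel (T : Type) (e : rel T) : Prop :=
  forall (x : T) (p : seq T), path e x p -> last x p = x -> p = [::].

From mathcomp Require Import all_boot zify.
Set Implicit Arguments. Unset Strict Implicit. Unset Printing Implicit Defensive.

(* Along a directed cycle of the modified graph the dimension goes up by one
   along reversed (matched) edges and down by one along the others; since no
   cell lies in two matched edges and the cycle returns to its start, the two
   kinds of steps alternate.  Let [j] be the least stage of a matched edge on the
   cycle and [t] the coordinate it acts on: that edge descends to a cell whose
   [t]-th coordinate is a plus hemisphere, but after it the [t]-th coordinate is
   never a plus hemisphere again, so the cycle cannot close. *)

Lemma periodic_mod (T : Type) (f : nat -> T) N :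
  (forall i, f (i + N) = f i) -> forall i, f (i %% N) = f i.
Proof.
move=> f_per i; rewrite [in RHS](divn_eq i N) addnC.
by elim: (i %/ N) => [|q IHq]; rewrite ?addn0 // mulSnr addnA f_per.
Qed.

Lemma closed_walk_periodic (T : Type) (e : rel T) x p :
  0 < size p -> path e x p -> last x p = x ->
  exists N (f : nat -> T),
    [/\ 0 < N, forall i, f (i + N) = f i & forall i, e (f i) (f i.+1)].
Proof.
move=> N_gt0 /(pathP x) walk_p last_p.
pose f i := nth x (x :: p) (i %% size p).
have fS i : f i.+1 = nth x p (i %% size p).
  rewrite /f -addn1 -modnDml addn1.
  have [lt_iN | ge_iN] := ltnP (i %% size p).+1 (size p); first by rewrite modn_small.
  have -> : i %% size p = (size p).-1 by have := ltn_pmod i N_gt0; lia.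
  by rewrite prednK // modnn /= nth_last.
exists (size p), f; split=> // [i | i]; first by rewrite /f modnDr.
by rewrite fS; apply: walk_p; rewrite ltn_pmod.
Qed.

(* With [h] stepping by +1 on [u]-steps and by -1 otherwise, two consecutive
   descents can never be made up for, since ascents cannot follow each other. *)
Lemma periodic_alternating (h : nat -> nat) (u : nat -> bool) N :
  0 < N -> (forall i, h (i + N) = h i) ->
  (forall i, if u i then h i.+1 = (h i).+1 else h i = (h i.+1).+1) ->
  (forall i, ~~ (u i && u i.+1)) ->
  forall i, u i || u i.+1.
Proof.
move=> N_gt0 h_per h_step no_uu m; apply/negPn/negP => /norP[/negbTE um /negbTE um1].
have h_m : h m = (h m.+2).+2.
  by have := h_step m; have := h_step m.+1; rewrite um um1; lia.
have bound r : h (m.+2 + r) <= h m.+2 + u (m.+1 + r).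
  elim: r => [|r IHr]; first by rewrite !addn0 um1 addn0.
  have := h_step (m.+2 + r); have := no_uu (m.+1 + r).
  rewrite !addnS addSn; case: (u (m.+2 + r)) => /=; case: (u (m.+1 + r)) IHr => /=; lia.
have := bound (N.*2 - 2).
have -> : m.+2 + (N.*2 - 2) = m + N + N by lia.
by rewrite !h_per h_m; case: (u _) => /=; lia.
Qed.

Lemma sum_succ_single (I : finType) (a b : I -> nat) :
  (forall i, b i <= a i) -> \sum_i b i + 1 = \sum_i a i ->
  exists t, b t + 1 = a t /\ forall i, i != t -> a i = b i.
Proof.
move=> le_ba sum_ab; pose d i := a i - b i.
have sum_d : \sum_i d i = 1.
  suff : \sum_i a i = \sum_i b i + \sum_i d i by lia.
  by rewrite -big_split; apply: eq_bigr => i _; rewrite /= subnKC.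
have [t d_t | d0] := pickP (fun i => 0 < d i); last first.
  by move: sum_d; rewrite big1 // => i _; have := d0 i; rewrite /= lt0n => /negbFE/eqP.
rewrite (bigD1 t) //= in sum_d.
have /eqP : \sum_(i | i != t) d i = 0 by lia.
rewrite sum_nat_eq0 => /forallP d_other.
exists t; split; first by have := le_ba t; rewrite /d in sum_d d_t; lia.
move=> i ne_it; have := d_other i; rewrite ne_it /= /d => /eqP.
by have := le_ba i; lia.
Qed.

Definition plusD n (x : cellD n) : bool := if x is Some (true, _) then true else false.

Lemma MD_plus n (x y : cellD n) : MD x y -> ~~ plusD x && plusD y.
Proof. by case: x => [[[] i]|]; case: y => [[[] i']|]. Qed.

Lemma MD_neq n (x y : cellD n) : MD x y -> x != y.
Proof. by move/MD_plus/andP => [px py]; apply: contraNneq px => ->. Qed.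

Lemma closD_dim n (x y : cellD n) : closD x y -> dimD y <= dimD x.
Proof.
case: x => [[s i]|]; case: y => [[s' i']|] //=.
- by case/orP => [/ltnW //|/eqP [_ ->]].
- by move=> _; apply: ltnW.
Qed.

Lemma closD_dim_eq n (x y : cellD n) : closD x y -> dimD y = dimD x -> x = y.
Proof.
case: x => [[s i]|]; case: y => [[s' i']|] //=.
- by case/orP => [lt_i'i eq_i'i|/eqP -> //]; rewrite eq_i'i ltnn in lt_i'i.
- by move=> _ eq_i'n; have := ltn_ord i'; rewrite eq_i'n ltnn.
Qed.

Lemma closD_MD n (x y : cellD n) :
  ~~ plusD x -> plusD y -> closD x y -> dimD y + 1 = dimD x -> MD x y.
Proof. by case: x => [[[] i]|]; case: y => [[[] i']|] //= _ _ _ dim_xy; apply/eqP; lia. Qed.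

Section Matching.
Variables (n k : nat) (L : {set {set 'I_k}}).
Implicit Types (c d : cellP n k) (j s : nat).

Definition Mstage j : rel (cellP n k) := Mnew L j (MU L j).

Lemma GLedge_closD c d t : GLedge L c d -> closD (c t) (d t).
Proof. by case/and4P=> _ _ /forallP. Qed.

Lemma GLedge_single c d : GLedge L c d ->
  exists t, dimD (d t) + 1 = dimD (c t) /\ forall t', t' != t -> c t' = d t'.
Proof.
move=> cd; have /and4P[_ _ _ /eqP dim_cd] := cd.
have [t [dim_t same]] := sum_succ_single (fun t => closD_dim (GLedge_closD t cd)) dim_cd.
exists t; split=> // t' ne_t't.
by apply: closD_dim_eq; [exact: GLedge_closD | rewrite same].
Qed.

Lemma GLedge_diff c d t : GLedge L c d -> c t != d t ->
  closD (c t) (d t) /\ dimD (d t) + 1 = dimD (c t).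
Proof.
move=> cd ne_t; have [t' [dim_t' same]] := GLedge_single cd.
have -> : t = t' by apply/eqP; apply: contraNT ne_t => /same ->.
by split=> //; apply: GLedge_closD.
Qed.

Lemma MU_mono j j' c d : j <= j' -> MU L j c d -> MU L j' c d.
Proof.
elim: j' => [|j' IHj'].
  by rewrite leqn0 => /eqP ->.
by rewrite leq_eqVlt => /orP[/eqP <- //|/IHj' /= H] /H ->.
Qed.

Lemma covered_mono j j' c :
  j <= j' -> covered (MU L j) c -> covered (MU L j') c.
Proof.
move=> le_jj' /existsP[d /orP cd]; apply/existsP; exists d.
by case: cd => /(MU_mono le_jj') ->; rewrite ?orbT.
Qed.

Lemma MU_stage j c d : MU L j c d -> exists2 s, s < j & Mstage s c d.
Proof.
elim: j => [//|j IHj] /= /orP[/IHj[s lt_sj cd]|cd]; last by exists j.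
by exists s => //; apply: ltnW.
Qed.

Lemma ML_stage c d : ML L c d -> exists s, Mstage s c d.
Proof. by case/MU_stage=> s _; exists s. Qed.

Lemma Mstage_MD s c d : Mstage s c d -> exists2 t : 'I_k, val t = s & MD (c t) (d t).
Proof. by case/and4P=> _ _ _ /existsP[t /andP[/eqP ts MD_t]]; exists t. Qed.

Lemma Mstage_GLedge s c d : Mstage s c d -> GLedge L c d.
Proof. by case/and4P. Qed.

Lemma Mstage_MU s c d : Mstage s c d -> MU L s.+1 c d.
Proof. by move=> cd; apply/orP; right. Qed.

Lemma Mstage_ML s c d : Mstage s c d -> ML L c d.
Proof.
move=> cd; have [t ts _] := Mstage_MD cd.
by apply: (@MU_mono s.+1); [rewrite -ts ltn_ord | apply: Mstage_MU].
Qed.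

Lemma ML_GLedge c d : ML L c d -> GLedge L c d.
Proof. by case/ML_stage=> s /Mstage_GLedge. Qed.

Lemma Mstage_uncovered j s c d : j <= s -> Mstage s c d ->
  ~~ covered (MU L j) c && ~~ covered (MU L j) d.
Proof.
move=> le_js /and4P[_ unc_c unc_d _].
by apply/andP; split; apply: contra (covered_mono le_js) _.
Qed.

Lemma MU_covered j c d : MU L j c d -> covered (MU L j) c && covered (MU L j) d.
Proof. by move=> cd; apply/andP; split; apply/existsP; [exists d | exists c]; rewrite cd ?orbT. Qed.

(* For different stages the earlier one covers the shared cell [y]; for equal
   stages [y] would be both plus and non-plus in the same coordinate. *)
Lemma ML_noncomposable (x y z : cellP n k) : ML L z y -> ML L y x -> False.
Proof.
case/ML_stage=> s zy /ML_stage[s' yx].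
have [lt_ss' | lt_s's | eq_ss'] := ltngtP s s'.
- have /andP[unc_y _] := Mstage_uncovered lt_ss' yx.
  by have /andP[_ cov_y] := MU_covered (Mstage_MU zy); rewrite cov_y in unc_y.
- have /andP[_ unc_y] := Mstage_uncovered lt_s's zy.
  by have /andP[cov_y _] := MU_covered (Mstage_MU yx); rewrite cov_y in unc_y.
subst s'; have [t st /MD_plus/andP[_ y_plus]] := Mstage_MD zy.
have [t' st' /MD_plus/andP[y_notplus _]] := Mstage_MD yx.
have tt' : t' = t by apply: val_inj; rewrite st st'.
by rewrite tt' y_plus in y_notplus.
Qed.

Lemma ML_notplus c d t : ML L c d -> ~~ plusD (d t) -> ~~ plusD (c t).
Proof.
case/ML_stage=> s cd; have [t1 _ MD_t1] := Mstage_MD cd.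
have [t2 [_ same]] := GLedge_single (Mstage_GLedge cd).
have t12 : t1 = t2 by apply/eqP; apply: contraNT (MD_neq MD_t1) => /same ->.
have [-> _ | ne_tt1] := eqVneq t t1; first by case/andP: (MD_plus MD_t1).
by rewrite same // -t12.
Qed.

Lemma ML_uncovered_face j (t : 'I_k) c d : val t = j -> GLedge L c d ->
  ~~ covered (MU L j) c -> ~~ covered (MU L j) d ->
  ~~ plusD (c t) -> plusD (d t) -> ML L c d.
Proof.
move=> tj cd unc_c unc_d c_t d_t.
have ne_t : c t != d t by apply: contraNneq c_t => ->.
have [clos_t dim_t] := GLedge_diff cd ne_t.
apply: (@Mstage_ML j); apply/and4P; split=> //.
by apply/existsP; exists t; rewrite tj eqxx closD_MD.
Qed.

End Matching.

Section Cycle.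
Variables (n k : nat) (L : {set {set 'I_k}}) (N : nat) (f : nat -> cellP n k).
Hypotheses (N_gt0 : 0 < N) (f_periodic : forall i, f (i + N) = f i)
  (f_step : forall i, redge L (f i) (f i.+1)).

Let up i := ML L (f i.+1) (f i).

Lemma cycle_down i : ~~ up i -> GLedge L (f i) (f i.+1) && ~~ ML L (f i) (f i.+1).
Proof. by rewrite /up => /negbTE up_i; have := f_step i; rewrite /redge up_i orbF. Qed.

Lemma cycle_alternates i : up i || up i.+1.
Proof.
apply: (@periodic_alternating (fun i => dimP (f i)) _ N) => // [j | j | j].
- by rewrite f_periodic.
- case up_j: (up j).
    by have /and4P[_ _ _ /eqP <-] := ML_GLedge up_j; rewrite addn1.
  by have /andP[/and4P[_ _ _ /eqP <-] _] := cycle_down (negbT up_j); rewrite addn1.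
- by apply/negP => /andP[up_j up_j1]; apply: ML_noncomposable up_j1 up_j.
Qed.

Lemma cycle_min_stage : exists2 j, (exists i, Mstage L j (f i.+1) (f i)) &
  forall i s, Mstage L s (f i.+1) (f i) -> j <= s.
Proof.
pose P s := [exists i : 'I_N, Mstage L s (f i.+1) (f i)].
have stage_P i s : Mstage L s (f i.+1) (f i) -> P s.
  move=> st; apply/existsP; exists (Ordinal (ltn_pmod i N_gt0)) => /=.
  have f_mod := periodic_mod f_periodic.
  by rewrite -[in f (_ %% N).+1]f_mod -addn1 modnDml addn1 !f_mod.
have exP : exists s, P s.
  have [up_i | up_i] := orP (cycle_alternates 0); have [s st] := ML_stage up_i;
    by exists s; apply: stage_P st.
case: (ex_minnP exP) => j /existsP[i st] j_min.
by exists j => [|i' s /stage_P]; [exists i | exact: j_min].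
Qed.

(* Coordinate [t] of the minimal stage [j] can never turn into a plus cell: an
   ascent keeps it non-plus, and a descent creating a plus cell there would lie
   between cells untouched by the stages below [j], hence be matched itself. *)
Lemma cycle_notplus_step j (t : 'I_k) m : val t = j ->
  (forall i s, Mstage L s (f i.+1) (f i) -> j <= s) ->
  ~~ plusD (f m.+1 t) -> ~~ plusD (f m.+2 t).
Proof.
move=> tj j_min notplus_m1.
have [up_m1 | down_m1] := boolP (up m.+1); first exact: ML_notplus up_m1 _.
have /andP[G_m1 notML_m1] := cycle_down down_m1.
have up_m : up m by have := cycle_alternates m; rewrite (negbTE down_m1) orbF.
have up_m2 : up m.+2 by have := cycle_alternates m.+1; rewrite (negbTE down_m1).
have [s st] := ML_stage up_m; have /andP[unc_m1 _] := Mstage_uncovered (j_min _ _ st) st.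
have [s' st'] := ML_stage up_m2; have /andP[_ unc_m2] := Mstage_uncovered (j_min _ _ st') st'.
by apply: contraNN notML_m1; apply: ML_uncovered_face tj G_m1 unc_m1 unc_m2 notplus_m1.
Qed.

Lemma cycle_false : False.
Proof.
have [j [i0 st] j_min] := cycle_min_stage.
have [t tj /MD_plus/andP[notplus_i1 plus_i0]] := Mstage_MD st.
have notplus r : ~~ plusD (f (i0.+1 + r) t).
  elim: r => [|r IHr]; first by rewrite addn0.
  by rewrite addnS; apply: (cycle_notplus_step tj j_min); rewrite -addSn.
have := notplus N.-1; rewrite addSnnS prednK // f_periodic.
by rewrite plus_i0.
Qed.

End Cycle.

Theorem proposition3p3 (n k : nat) (L : {set {set 'I_k}}) :
  0 < n -> simplicial_complex L -> acyclic_rel (redge (n:=n) L).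
Proof.
move=> _ _ x [//|y q] walk last_walk; exfalso.
have [N [f [N_gt0 f_periodic f_step]]] := @closed_walk_periodic _ _ x (y :: q) isT walk last_walk.
exact: cycle_false N_gt0 f_periodic f_step.
Qed.
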